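(* The function $\psi:\mathcal{P}_M\times\Theta^M\to[0,\infty]$ defined by $$\psi(\boldsymbol{w},\boldsymbol{\theta}) := \inf_{\boldsymbol{\lambda}\in\mathrm{Alt}(\boldsymbol{\theta})}\ \sum_{m=1}^M w_m\, D^{(m)}_{\mathrm{KL}}(\boldsymbol{\theta}_m,\boldsymbol{\lambda}_m)$$ is continuous on $\mathcal{P}_M\times\Theta^M$.
   Context: $M$ arms, $K$ clusters with $1<K<M$, $\Theta\subset\mathbb{R}^d$ compact. For each arm $m$, a parametric family $\{P_m(\cdot\mid\boldsymbol{\rho}):\boldsymbol{\rho}\in\Theta\}$ with $D^{(m)}_{\mathrm{KL}}(\boldsymbol{\rho}_1,\boldsymbol{\rho}_2)=\mathbb{E}_{X\sim P_m(\cdot\mid\boldsymbol{\rho}_1)}\big[\log\frac{P_m(X\mid\boldsymbol{\rho}_1)}{P_m(X\mid\boldsymbol{\rho}_2)}\big]$, assumed finite and uniformly continuous in $(\boldsymbol{\rho}_1,\boldsymbol{\rho}_2)\in\Theta\times\Theta$ for each $m$. $\mathcal{P}_M=\{\boldsymbol{w}\in\mathbb{R}_+^M:\sum_m w_m=1\}$. For $\boldsymbol{\theta}\in\Theta^M$, $\mathcal{C}(\boldsymbol{\theta})\in[K]^M$ is the cluster index vector obtained by single-linkage clustering of the points $\boldsymbol{\theta}_1,\dots,\boldsymbol{\theta}_M$ (start from singletons, repeatedly merge the two clusters at smallest minimum pairwise Euclidean distance, ties broken by a fixed rule, until $K$ clusters remain). $\boldsymbol{c}\sim\boldsymbol{c}'$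 iff $\boldsymbol{c}=\sigma(\boldsymbol{c}')$ for a permutation $\sigma$ of $[K]$. $\mathrm{Alt}(\boldsymbol{\theta})=\{\boldsymbol{\lambda}\in\Theta^M:\mathcal{C}(\boldsymbol{\lambda})\nsim\mathcal{C}(\boldsymbol{\theta})\}$. *)

From HB Require Import structures.
From mathcomp Require Import all_boot all_order all_algebra all_fingroup.
From mathcomp Require Import all_classical all_reals all_analysis.
Set Implicit Arguments. Unset Strict Implicit. Unset Printing Implicit Defensive.
Import Order.TTheory GRing.Theory Num.Theory.
Import numFieldNormedType.Exports.
Local Open Scope classical_set_scope.
Local Open Scope ring_scope.

Section Defs.
Variable R : realType.

Definition eucl_dist (d : nat) (x y : 'rV[R]_d) : R :=
  Num.sqrt (\sum_(i < d) (x ord0 i - y ord0 i) ^+ 2).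

Definition simplex (M : nat) : set 'rV[R]_M :=
  [set w | (forall m, 0 <= w ord0 m) /\ \sum_(m < M) w ord0 m = 1].

(** A current clustering is encoded by lab : 'I_M -> 'I_M mapping each
    point to the smallest index of its cluster (its "root").          *)

Definition sl_cand (M d : nat) (theta : 'M[R]_(M, d)) (lab : 'I_M -> 'I_M)
    (p : 'I_M * 'I_M) : bool :=
  [&& lab p.1 == p.1, lab p.2 == p.2, (p.1 < p.2)%N &
   [exists i, exists j,
     [&& lab i == p.1, lab j == p.2 &
      [forall i', forall j', (lab i' != lab j') ==>
         (eucl_dist (row i theta) (row j theta) <= eucl_dist (row i' theta) (row j' theta))]]]].

(* One merge step.  Ties are broken by the fixed rule "lexicographically
   first pair (r, s) of cluster roots" ([pick] returns the first element
   in the (lexicographic) enumeration of 'I_M * 'I_M). *)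
Definition sl_step (M d : nat) (theta : 'M[R]_(M, d)) (lab : 'I_M -> 'I_M)
    : 'I_M -> 'I_M :=
  match [pick p | sl_cand theta lab p] with
  | Some p => fun i => if lab i == p.2 then p.1 else lab i
  | None => lab
  end.

Definition sl_labels (M d K : nat) (theta : 'M[R]_(M, d)) : 'I_M -> 'I_M :=
  iter (M - K) (sl_step theta) id.

(* Cluster index vector C(theta) in [K]^M (labels 0..K-1; clusters are
   numbered by increasing smallest element). *)
Definition cluster_index (M d K : nat) (theta : 'M[R]_(M, d)) (m : 'I_M) : nat :=
  let lab := sl_labels K theta in
  #|[set r : 'I_M | (lab r == r) && (r < lab m)%N]|.

Definition clust_equiv (M K : nat) (c c' : 'I_M -> nat) : Prop :=
  exists sigma : {perm 'I_K},
    forall m, exists hm : (c' m < K)%N, c m = val (sigma (Ordinal hm)).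

Definition paramsM (M d : nat) (Theta : set 'rV[R]_d) : set 'M[R]_(M, d) :=
  [set theta | forall m, Theta (row m theta)].

Definition Alt (M d K : nat) (Theta : set 'rV[R]_d) (theta : 'M[R]_(M, d))
    : set 'M[R]_(M, d) :=
  [set lam | paramsM Theta lam /\
             ~ clust_equiv K (cluster_index K lam) (cluster_index K theta)].

Definition kl_integrand (a b : R) : \bar R :=
  if a == 0 then 0%E else if b == 0 then +oo%E else (a * ln (a / b))%:E.

Definition KL (dT : measure_display) (T : measurableType dT)
    (mu : {measure set T -> \bar R}) (f g : T -> R) : \bar R :=
  (\int[mu]_x kl_integrand (f x) (g x))%E.

Definition psi (dT : measure_display) (T : measurableType dT) (M d K : nat)
    (Theta : set 'rV[R]_d) (mu : 'I_M -> {measure set T -> \bar R})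
    (p : 'I_M -> 'rV[R]_d -> T -> R) (w : 'rV[R]_M) (theta : 'M[R]_(M, d))
    : \bar R :=
  ereal_inf [set (\sum_(m < M) (w ord0 m)%:E *
                    KL (mu m) (p m (row m theta)) (p m (row m lam)))%E
            | lam in Alt K Theta theta].

End Defs.
Arguments simplex {R} M.
Arguments paramsM {R} M {d} Theta.

From HB Require Import structures.
From mathcomp Require Import all_boot all_order all_algebra all_fingroup.
From mathcomp Require Import all_classical all_reals all_analysis.
From mathcomp Require Import measurable_realfun lra ring.
Import Order.TTheory GRing.Theory Num.Theory.
Import numFieldNormedType.Exports.
Local Open Scope classical_set_scope.
Local Open Scope ring_scope.
Set Implicit Arguments. Unset Strict Implicit.

(* The objective lam |-> sum_m w_m KL_m(theta_m, lam_m) is nonnegative (Gibbs'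
   inequality), vanishes at lam = theta and, the divergences being bounded and
   uniformly continuous on the compact Theta, moves uniformly in lam when
   (w, theta) moves.  Alt(theta) is the complement of the class of theta for the
   relation "same clustering up to relabelling", which is symmetric and
   transitive whatever the clustering map is.  Near (w0, theta0) either theta is
   in the class of theta0, and psi(w, theta), psi(w0, theta0) are infima of
   uniformly close functions over the same set, or theta lies in Alt(theta0)
   and theta0 in Alt(theta), and then both infima are squeezed between 0 and
   the objective evaluated near the diagonal. *)

Lemma inf_image_close (R : realType) (T : Type) (X : set T) (f f0 : T -> R) (c : R) :
  X !=set0 -> has_lbound (f @` X) -> has_lbound (f0 @` X) ->
  (forall x, X x -> `|f x - f0 x| <= c) ->
  `|inf (f @` X) - inf (f0 @` X)| <= c.
Proof.
move=> X0 lbf lbf0 fc; have nf := image_nonempty f X0.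
have nf0 := image_nonempty f0 X0.
have le_inf (h : T -> R) : has_lbound (h @` X) -> forall x, X x -> inf (h @` X) <= h x.
  by move=> lbh x Xx; apply: ge_inf lbh _ _; exists x.
rewrite ler_norml; apply/andP; split.
- suff : inf (f0 @` X) - c <= inf (f @` X) by lra.
  apply: lb_le_inf => // _ [x Xx <-]; have := fc x Xx; rewrite ler_norml.
  by have := le_inf f0 lbf0 x Xx; lra.
- suff : inf (f @` X) - c <= inf (f0 @` X) by lra.
  apply: lb_le_inf => // _ [x Xx <-]; have := fc x Xx; rewrite ler_norml.
  by have := le_inf f lbf x Xx; lra.
Qed.

Section InfOverAlternatives.
Context {R : realType} {L : Type} (S : set L) (E : L -> L -> Prop).
Hypotheses (E_sym : forall a b, E a b -> E b a)
  (E_trans : forall a b c, E a b -> E b c -> E a c).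

Let alt (a : L) := [set lam | S lam /\ ~ E lam a].

Lemma alt_eq a b : E a b -> alt a = alt b.
Proof.
move=> Eab; apply/seteqP; split => lam [Sl nE]; split => // Elam; apply: nE.
  exact: E_trans Elam (E_sym Eab).
exact: E_trans Elam Eab.
Qed.

Lemma alt_swap a b : S b -> alt b a -> alt a b.
Proof. by move=> Sb [_ nE]; split => // /E_sym. Qed.

Lemma alt_nonempty a b : S a -> S b -> alt b !=set0 -> alt a !=set0.
Proof.
move=> Sa Sb [lam [Sl nE]]; have [Ela|nEla] := pselect (E lam a).
  by exists b; split => // Eba; apply: nE; exact: E_trans Ela (E_sym Eba).
by exists lam.
Qed.

Context {Z : Type} (F : set_system Z) {FF : Filter F} (A : set Z) (z0 : Z).
Variables (self : Z -> L) (G : Z -> L -> \bar R) (g : Z -> L -> R).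
Hypotheses (Az0 : A z0) (near_A : \forall z \near F, A z)
  (self_S : forall z, A z -> S (self z))
  (G_EFin : forall z lam, A z -> S lam -> G z lam = (g z lam)%:E)
  (g_ge0 : forall z lam, A z -> S lam -> 0 <= g z lam)
  (g_self : forall z, A z -> g z (self z) = 0)
  (g_unif : forall e, 0 < e ->
     \forall z \near F, forall lam, S lam -> `|g z lam - g z0 lam| <= e).

Let inf_alt z := inf (g z @` alt (self z)).

Let inf_alt_lbound z : A z -> has_lbound (g z @` alt (self z)).
Proof. by move=> Az; exists 0 => _ [lam [Sl _] <-]; exact: g_ge0. Qed.

Let inf_alt_ge0 z : A z -> alt (self z) !=set0 -> 0 <= inf_alt z.
Proof.
move=> Az alt0; apply: lb_le_inf; first exact: image_nonempty.
by move=> _ [lam [Sl _] <-]; exact: g_ge0.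
Qed.

Let inf_alt_le z lam : A z -> alt (self z) lam -> inf_alt z <= g z lam.
Proof. by move=> Az altl; apply: ge_inf (inf_alt_lbound Az) _ _; exists lam. Qed.

Let ereal_inf_altE z : A z -> alt (self z) !=set0 ->
  ereal_inf (G z @` alt (self z)) = (inf_alt z)%:E.
Proof.
move=> Az alt0; rewrite -ereal_inf_EFin ?image_comp; last 2 first.
- exact: inf_alt_lbound.
- exact: image_nonempty.
by congr ereal_inf; apply: eq_imagel => lam [Sl _]; exact: G_EFin.
Qed.

Let inf_alt_close z e : A z -> alt (self z0) !=set0 ->
  (forall lam, S lam -> `|g z lam - g z0 lam| <= e) -> `|inf_alt z0 - inf_alt z| <= e.
Proof.
move=> Az alt0 close; have [Ez|nEz] := pselect (E (self z) (self z0)).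
  have lbz := inf_alt_lbound Az; rewrite distrC /inf_alt (alt_eq Ez) in lbz *.
  apply: inf_image_close lbz (inf_alt_lbound Az0) _ => //.
  by move=> lam [Sl _]; exact: close.
have alt_z0 : alt (self z0) (self z) by split; [exact: self_S|].
have alt_z : alt (self z) (self z0) by apply: alt_swap => //; exact: self_S.
have := close _ (self_S Az); have := close _ (self_S Az0).
rewrite !ler_norml !g_self // => /andP[_ c0] /andP[c1 _].
have := inf_alt_le Az0 alt_z0; have := inf_alt_le Az alt_z.
have := inf_alt_ge0 Az0 alt0.
have := inf_alt_ge0 Az (alt_nonempty (self_S Az) (self_S Az0) alt0).
by move=> *; apply/andP; split; lra.
Qed.

Lemma ereal_inf_alt_cvg :
  (fun z => ereal_inf (G z @` alt (self z))) @ F --> ereal_inf (G z0 @` alt (self z0)).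
Proof.
have [alt0|no_alt] := pselect (alt (self z0) !=set0); last first.
  have altE z : A z -> alt (self z) = set0.
    move=> Az; apply/seteqP; split => // lam altl; apply: no_alt.
    by apply: alt_nonempty (self_S Az0) (self_S Az) _; exists lam.
  rewrite altE // image_set0.
  have cstE : \forall z \near F, cst (ereal_inf set0) z = ereal_inf (G z @` alt (self z)).
    by apply: filterS near_A => z Az; rewrite altE // image_set0.
  exact: cvg_trans (near_eq_cvg cstE) (cvg_cst _).
have infE : \forall z \near F, ereal_inf (G z @` alt (self z)) = (inf_alt z)%:E.
  apply: filterS near_A => z Az.
  by rewrite ereal_inf_altE //; exact: alt_nonempty (self_S Az) (self_S Az0) alt0.
rewrite ereal_inf_altE //; apply: cvg_EFin; first by apply: filterS infE => z ->.
apply: (@cvg_trans _ (inf_alt @ F)).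
  by apply: near_eq_cvg; apply: filterS infE => z /= ->.
apply/cvgrPdist_le => e e0; near=> z; apply: inf_alt_close => //.
  by near: z.
by near: z; exact: g_unif.
Unshelve. all: by end_near.
Qed.

End InfOverAlternatives.

Section KullbackLeibler.
Context {R : realType}.

Lemma kl_integrand_ge_sub (a b : R) : 0 <= a -> 0 <= b ->
  ((a - b)%:E <= kl_integrand a b)%E.
Proof.
move=> a0 b0; rewrite /kl_integrand.
have [->|an0] := eqVneq a 0; first by rewrite lee_fin sub0r oppr_le0.
have [->|bn0] := eqVneq b 0; first exact: leey.
have ap : 0 < a by rewrite lt0r an0.
have bp : 0 < b by rewrite lt0r bn0.
have : ln (1 + (b / a - 1)) <= b / a - 1.
  by apply: le_ln1Dx; rewrite ltrBrDl subrr divr_gt0.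
rewrite addrC subrK => ln_le.
rewrite lee_fin -[a / b]invf_div lnV ?posrE ?divr_gt0 //.
have : a * (1 - b / a) <= a * - ln (b / a) by rewrite ler_pM2l // lerNr opprB.
by rewrite mulrBr mulr1 mulrCA divff ?mulr1 // gt_eqF.
Qed.

Lemma kl_integrand_id (a : R) : kl_integrand a a = 0%E.
Proof.
by rewrite /kl_integrand; case: eqP => // /eqP an0; rewrite divff // ln1 mulr0.
Qed.

(* Gibbs' inequality [a - b <= kl_integrand a b] rearranged so that both sides
   are nonnegative and can be integrated separately. *)
Lemma le_funeneg_funepos (a b : R) (x : \bar R) : ((a - b)%:E <= x)%E ->
  (maxe (- x) 0 + a%:E <= maxe x 0 + b%:E)%E.
Proof.
case: x => [r||] //=; last by rewrite addye ?leey.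
rewrite lee_fin => abr; have [r0|r0] := leP 0 r.
  rewrite (max_idPl (_ : 0 <= r%:E)%E) ?lee_fin //.
  rewrite (max_idPr (_ : (- r)%:E <= 0)%E) ?lee_fin ?oppr_le0 //.
  by rewrite add0r -lerBlDr.
rewrite (max_idPr (_ : r%:E <= 0)%E) ?lee_fin ?(ltW r0) //.
rewrite (max_idPl (_ : 0 <= (- r)%:E)%E) ?lee_fin ?oppr_ge0 ?(ltW r0) //.
by rewrite add0r; lra.
Qed.

Context {dT : measure_display} {T : measurableType dT} (mu : {measure set T -> \bar R}).

Lemma measurable_kl_integrand (f g : T -> R) :
  measurable_fun setT f -> measurable_fun setT g ->
  (forall x, 0 <= f x) -> (forall x, 0 <= g x) ->
  measurable_fun setT ((fun x => kl_integrand (f x) (g x)) : T -> \bar R).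
Proof.
move=> mf mg f0 g0.
have -> : (fun x => kl_integrand (f x) (g x)) =
  (fun x => if f x == 0 then 0%E else if g x == 0 then +oo%E
            else (f x * (ln (f x) - ln (g x)))%:E).
  apply/funext => x; rewrite /kl_integrand.
  case: eqVneq => // fn0; case: eqVneq => // gn0.
  have fp : 0 < f x by rewrite lt0r fn0 f0.
  have gp : 0 < g x by rewrite lt0r gn0 g0.
  by rewrite lnM ?posrE ?invr_gt0 // lnV ?posrE.
have meq0 (h : T -> R) : measurable_fun setT h -> measurable_fun setT (fun x => h x == 0).
  by move=> mh; apply: measurable_fun_eqr => //; exact: measurable_cst.
apply: measurable_fun_ifT; [exact: meq0|exact: measurable_cst|].
apply: measurable_fun_ifT; [exact: meq0|exact: measurable_cst|].
apply/measurable_EFinP; apply: measurable_funM => //.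
by apply: measurable_funB; apply: measurableT_comp (@measurable_ln R) _.
Qed.

Lemma KL_id (f : T -> R) : KL mu f f = 0%E.
Proof. by rewrite /KL integral0_eq // => x _; exact: kl_integrand_id. Qed.

Lemma KL_ge0 (f g : T -> R) :
  measurable_fun setT f -> measurable_fun setT g ->
  (forall x, 0 <= f x) -> (forall x, 0 <= g x) ->
  (\int[mu]_x (f x)%:E = 1)%E -> (\int[mu]_x (g x)%:E = 1)%E ->
  KL mu f g \is a fin_num -> (0 <= KL mu f g)%E.
Proof.
move=> mf mg f0 g0 If Ig.
set h := fun x => kl_integrand (f x) (g x).
have mh : measurable_fun setT h by exact: measurable_kl_integrand.
have mfE : measurable_fun setT (EFin \o f) by exact/measurable_EFinP.
have mgE : measurable_fun setT (EFin \o g) by exact/measurable_EFinP.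
have mhp : measurable_fun setT (h^\+)%E by exact: measurable_funepos.
have mhn : measurable_fun setT (h^\-)%E by exact: measurable_funeneg.
have le_parts : (\int[mu]_x h^\- x <= \int[mu]_x h^\+ x)%E.
  have : (\int[mu]_x (h^\- x + (f x)%:E) <= \int[mu]_x (h^\+ x + (g x)%:E))%E.
    apply: ge0_le_integral => //.
    - by move=> x _; rewrite adde_ge0 ?funeneg_ge0 ?lee_fin.
    - exact: emeasurable_funD.
    - exact: emeasurable_funD.
    - move=> x _; rewrite funeposE funenegE.
      exact/le_funeneg_funepos/kl_integrand_ge_sub.
  by rewrite !ge0_integralD // ?If ?Ig ?leeD2rE // => x _; rewrite lee_fin.
rewrite /KL -/h integralE => fin.
have [finn|] := boolP (\int[mu]_x h^\- x \is a fin_num)%E.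
  by rewrite sube_ge0 ?finn.
rewrite ge0_fin_numE ?integral_ge0 // -leNgt leye_eq => /eqP hn.
by move: le_parts fin; rewrite hn leye_eq => /eqP ->.
Qed.

End KullbackLeibler.

Lemma clust_equiv_sym (M K : nat) (c c' : 'I_M -> nat) :
  clust_equiv K c c' -> clust_equiv K c' c.
Proof.
move=> [s cE]; exists s^-1%g => m; have [cm' ->] := cE m.
exists (ltn_ord _).
by rewrite (_ : Ordinal _ = s (Ordinal cm')) ?permK //; exact: val_inj.
Qed.

Lemma clust_equiv_trans (M K : nat) (c c' c'' : 'I_M -> nat) :
  clust_equiv K c c' -> clust_equiv K c' c'' -> clust_equiv K c c''.
Proof.
move=> [s cE] [t cE']; exists (t * s)%g => m.
have [cm'' E''] := cE' m; have [cm' E'] := cE m; exists cm''.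
by rewrite permM E'; congr (val (s _)); exact: val_inj.
Qed.

Section EuclideanDistance.
Context {R : realType}.

Lemma eucl_dist_lt d (x y : 'rV[R]_d) (eta : R) : 0 < eta ->
  (forall i, `|x ord0 i - y ord0 i| < eta) -> eucl_dist x y < d.+1%:R * eta.
Proof.
move=> eta0 xy.
have sum_le : \sum_(i < d) (x ord0 i - y ord0 i) ^+ 2 <= d%:R * eta ^+ 2.
  rewrite mulr_natl -[X in _ *+ X]card_ord -sumr_const; apply: ler_sum => i _.
  by have := xy i; rewrite ltr_norml => /andP[lo hi]; nra.
rewrite /eucl_dist -[_ * eta]ger0_norm ?mulr_ge0 ?ltW // -sqrtr_sqr.
rewrite ltr_sqrt ?exprn_gt0 ?mulr_gt0 //; apply: le_lt_trans sum_le _.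
have : 0 <= d%:R :> R by rewrite ler0n.
rewrite -natr1; nra.
Qed.

Lemma eucl_distxx d (x : 'rV[R]_d) : eucl_dist x x = 0.
Proof. by rewrite /eucl_dist big1 ?sqrtr0 // => i _; rewrite subrr expr0n. Qed.

Lemma near_mx_entries m n (x0 : 'M[R]_(m, n)) (e : R) : 0 < e ->
  \forall x \near x0, forall i j, `|(x : 'M[R]_(m, n)) i j - x0 i j| < e.
Proof.
by move=> e0; apply/nbhs_ballP; exists e => // x [_ x0x] i j; rewrite distrC; exact: x0x.
Qed.

Lemma near_row_eucl_dist m n (x0 : 'M[R]_(m, n)) (e : R) : 0 < e ->
  \forall x \near x0, forall i, eucl_dist (row i x) (row i x0) < e.
Proof.
move=> e0; have e'0 : 0 < e / n.+1%:R by rewrite divr_gt0.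
apply: filterS (near_mx_entries x0 e'0) => x x0x i.
have -> : e = n.+1%:R * (e / n.+1%:R) by rewrite mulrC divfK.
by apply: eucl_dist_lt => // j; rewrite !mxE.
Qed.

Definition uniform_continuous_on2 d (Theta : set 'rV[R]_d)
    (k : 'rV[R]_d -> 'rV[R]_d -> R) :=
  forall e, 0 < e -> exists2 delta, 0 < delta &
    forall a b a' b', Theta a -> Theta b -> Theta a' -> Theta b' ->
      eucl_dist a a' < delta -> eucl_dist b b' < delta -> `|k a b - k a' b'| < e.

Lemma uniform_continuous_on2_bounded d (Theta : set 'rV[R]_d) k :
  compact Theta -> uniform_continuous_on2 Theta k ->
  exists B, forall a b, Theta a -> Theta b -> `|k a b| <= B.
Proof.
move=> cT kUC; pose k2 z := k z.1 z.2.
have k2C : {within Theta `*` Theta, continuous k2}.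
  apply/subspace_continuousP => -[a0 b0] [Ta0 Tb0]; apply/cvgrPdist_lt => e e0.
  have [del del0 kdel] := kUC e e0.
  have near_del (x0 : 'rV[R]_d) : \forall x \near x0, eucl_dist x x0 < del.
    by apply: filterS (near_row_eucl_dist x0 del0) => x /(_ ord0); rewrite !row_id.
  near=> z; rewrite /k2 /= distrC.
  have [Tz1 Tz2] : (Theta `*` Theta) z by near: z; exact: withinT.
  apply: kdel => //.
  - by near: z; apply: cvg_within; exact: cvg_fst (near_del a0).
  - by near: z; apply: cvg_within; exact: cvg_snd (near_del b0).
have [B [_ kB]] := compact_bounded (continuous_compact k2C (compact_setX cT cT)).
exists (`|B| + 1) => a b Ta Tb; apply: (kB (`|B| + 1)); last by exists (a, b).
by apply: le_lt_trans (ler_norm B) _; rewrite ltrDl.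
Unshelve. all: by end_near.
Qed.

Lemma uniform_continuous_on2_bounded_family n d (Theta : set 'rV[R]_d)
    (k : 'I_n -> 'rV[R]_d -> 'rV[R]_d -> R) :
  compact Theta -> (forall i, uniform_continuous_on2 Theta (k i)) ->
  exists B, forall i a b, Theta a -> Theta b -> `|k i a b| <= B.
Proof.
move=> cT kuc; have /choice[Bi kBi] i := uniform_continuous_on2_bounded cT (kuc i).
exists (\big[Order.max/0]_i Bi i) => i a b Ta Tb.
by apply: le_trans (kBi i a b Ta Tb) _; exact: le_bigmax.
Qed.

Lemma near_rows_uniform_continuous_on2 m d (Theta : set 'rV[R]_d)
    (k : 'I_m -> 'rV[R]_d -> 'rV[R]_d -> R) (th0 : 'M[R]_(m, d)) :
  (forall i, uniform_continuous_on2 Theta (k i)) -> paramsM m Theta th0 ->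
  forall e, 0 < e -> \forall th \near th0, paramsM m Theta th ->
    forall i lam, paramsM m Theta lam ->
      `|k i (row i th) (row i lam) - k i (row i th0) (row i lam)| <= e.
Proof.
move=> kuc Sth0 e e0.
have /filter_forall : forall i, \forall th \near th0, paramsM m Theta th ->
    forall lam, paramsM m Theta lam ->
      `|k i (row i th) (row i lam) - k i (row i th0) (row i lam)| <= e.
  move=> i; have [del del0 kdel] := kuc i e e0.
  apply: filterS (near_row_eucl_dist th0 del0) => th near_th Sth lam Slam.
  by apply/ltW/kdel; rewrite ?eucl_distxx.
by apply: filterS => th near_th Sth i lam Slam; exact: near_th.
Qed.

End EuclideanDistance.

Section WeightedSums.
Context {R : realType} (M : nat).

Lemma weighted_sum_close (w w0 k k0 : 'I_M -> R) (B eta c : R) :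
  (forall m, 0 <= w0 m) -> \sum_m w0 m = 1 -> (forall m, `|k m| <= B) ->
  (forall m, `|w m - w0 m| <= eta) -> (forall m, `|k m - k0 m| <= c) ->
  `|\sum_m w m * k m - \sum_m w0 m * k0 m| <= M%:R * (eta * B) + c.
Proof.
move=> w0_ge0 w0_sum kB ww0 kk0; rewrite -sumrB.
apply: le_trans (ler_norm_sum _ _ _) _.
apply: (@le_trans _ _ (\sum_m (eta * B + w0 m * c))).
  apply: ler_sum => m _.
  rewrite (_ : _ - _ = (w m - w0 m) * k m + w0 m * (k m - k0 m)); last by ring.
  apply: le_trans (ler_normD _ _) _; rewrite !normrM (ger0_norm (w0_ge0 m)).
  by apply: lerD; [exact: ler_pM|exact: ler_wpM2l].
by rewrite big_split /= sumr_const card_ord -mulr_suml w0_sum mul1r mulr_natl.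
Qed.

Lemma near_weighted_sum {Z Y : Type} (F : set_system Z) {FF : Filter F}
    (w : Z -> 'I_M -> R) (w0 : 'I_M -> R) (k : Z -> 'I_M -> Y -> R)
    (k0 : 'I_M -> Y -> R) (S : set Y) (B : R) :
  (forall m, 0 <= w0 m) -> \sum_m w0 m = 1 ->
  (\forall z \near F, forall m y, S y -> `|k z m y| <= B) ->
  (forall e, 0 < e -> \forall z \near F, forall m, `|w z m - w0 m| <= e) ->
  (forall e, 0 < e -> \forall z \near F, forall m y, S y -> `|k z m y - k0 m y| <= e) ->
  forall e, 0 < e -> \forall z \near F, forall y, S y ->
    `|\sum_m w z m * k z m y - \sum_m w0 m * k0 m y| <= e.
Proof.
move=> w0_ge0 w0_sum kB ww0 kk0 e e0.
have MB0 : 0 <= M%:R * `|B| by rewrite mulr_ge0 ?ler0n.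
pose eta := e / (2 * (M%:R * `|B| + 1)).
have eta0 : 0 < eta by rewrite divr_gt0 ?mulr_gt0 ?ltr_wpDl.
have etaE : eta * (2 * (M%:R * `|B| + 1)) = e.
  by rewrite divfK ?gt_eqF ?mulr_gt0 ?ltr_wpDl.
have e20 : 0 < e / 2 by rewrite divr_gt0.
near=> z => y Sy.
have kBz : forall m y, S y -> `|k z m y| <= B by near: z.
have ww0z : forall m, `|w z m - w0 m| <= eta by near: z; exact: ww0.
have kk0z : forall m y, S y -> `|k z m y - k0 m y| <= e / 2 by near: z; exact: kk0.
apply: le_trans (weighted_sum_close (k := fun m => k z m y) (k0 := fun m => k0 m y)
  (B := `|B|) w0_ge0 w0_sum _ ww0z (fun m => kk0z m y Sy)) _.
  by move=> m; apply: le_trans (ler_norm _); exact: kBz.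
by rewrite mulrCA; move: etaE; set X := M%:R * `|B|; nra.
Unshelve. all: by end_near.
Qed.

Definition weighted_row_sum d (k : 'I_M -> 'rV[R]_d -> 'rV[R]_d -> R)
    (w : 'rV[R]_M) (th lam : 'M[R]_(M, d)) :=
  \sum_m w ord0 m * k m (row m th) (row m lam).

Lemma near_weighted_row_sum d (Theta : set 'rV[R]_d) k (B : R) w0 th0 :
  simplex M w0 -> paramsM M Theta th0 ->
  (forall m, uniform_continuous_on2 Theta (k m)) ->
  (forall m a b, Theta a -> Theta b -> `|k m a b| <= B) ->
  forall e, 0 < e ->
  \forall z \near within (simplex M `*` paramsM M Theta) (nbhs (w0, th0)),
    forall lam, paramsM M Theta lam ->
      `|weighted_row_sum k z.1 z.2 lam - weighted_row_sum k w0 th0 lam| <= e.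
Proof.
move=> [w0_ge0 w0_sum] Sth0 kuc kB.
apply: (near_weighted_sum (B := B) w0_ge0 w0_sum).
- by apply: filterS (withinT _ _) => z [_ Sz] m lam Slam; exact: kB.
- move=> e e0; near=> z; have : forall i j, `|z.1 i j - w0 i j| < e.
    by near: z; apply: cvg_within; exact: cvg_fst (near_mx_entries w0 e0).
  by move=> wz m; exact/ltW/wz.
- move=> e e0; near=> z; have [_ Sz] : (simplex M `*` paramsM M Theta) z.
    by near: z; exact: withinT.
  move: Sz; near: z; apply: cvg_within.
  exact: cvg_snd (near_rows_uniform_continuous_on2 kuc Sth0 e0).
Unshelve. all: by end_near.
Qed.

End WeightedSums.

Theorem lemma1 (R : realType) (M K d : nat)
  (dT : measure_display) (T : measurableType dT)
  (Theta : set 'rV[R]_d)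
  (mu : 'I_M -> {measure set T -> \bar R})
  (p : 'I_M -> 'rV[R]_d -> T -> R) :
  (1 < K)%N -> (K < M)%N ->
  compact Theta ->
  (forall m rho, Theta rho ->
     [/\ measurable_fun setT (p m rho), (forall x, 0 <= p m rho x)
       & (\int[mu m]_x (p m rho x)%:E = 1)%E]) ->
  (forall m rho1 rho2, Theta rho1 -> Theta rho2 ->
     KL (mu m) (p m rho1) (p m rho2) \is a fin_num) ->
  (forall m (e : R), 0 < e -> exists2 delta : R, 0 < delta &
     forall a b a' b', Theta a -> Theta b -> Theta a' -> Theta b' ->
       eucl_dist a a' < delta -> eucl_dist b b' < delta ->
       `|fine (KL (mu m) (p m a) (p m b)) - fine (KL (mu m) (p m a') (p m b'))|
         < e) ->
  {within simplex M `*` paramsM M Theta,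
     continuous (fun z : 'rV[R]_M * 'M[R]_(M, d) =>
                   psi K Theta mu p z.1 z.2)}.
Proof.
move=> _ _ cT dens KL_fin KL_uc.
pose kl m (a b : 'rV[R]_d) := fine (KL (mu m) (p m a) (p m b)).
have kl_ge0 m a b : Theta a -> Theta b -> 0 <= kl m a b.
  move=> Ta Tb; have [ma pa Ia] := dens m a Ta; have [mb pb Ib] := dens m b Tb.
  exact/fine_ge0/(KL_ge0 ma mb pa pb Ia Ib)/KL_fin.
have [B klB] := uniform_continuous_on2_bounded_family cT KL_uc.
apply/subspace_continuousP => -[w0 th0] [/= w0S Sth0].
apply: (@ereal_inf_alt_cvg R _ (paramsM M Theta)
  (fun a b => clust_equiv K (cluster_index K a) (cluster_index K b)) _ _ _ _ _
  (simplex M `*` paramsM M Theta) (w0, th0) snd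
  (fun z lam => \sum_m (z.1 ord0 m)%:E * KL (mu m) (p m (row m z.2)) (p m (row m lam)))%E
  (fun z lam => weighted_row_sum kl z.1 z.2 lam)).
- by move=> a b; exact: clust_equiv_sym.
- by move=> a b c; exact: clust_equiv_trans.
- by [].
- exact: withinT.
- by move=> z [].
- move=> z lam [_ Sz] Slam; rewrite -sumEFin; apply: eq_bigr => m _.
  by rewrite EFinM fineK ?KL_fin.
- move=> z lam [[z_ge0 _] Sz] Slam; apply: sumr_ge0 => m _.
  by rewrite mulr_ge0 ?kl_ge0.
- by move=> z _; rewrite /weighted_row_sum big1 // => m _; rewrite /kl KL_id mulr0.
- exact: near_weighted_row_sum w0S Sth0 KL_uc klB.
Qed.
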